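(* Let $G$ be a finite group, $k$ a field of characteristic $p$, and $V$ an absolutely $p$-divisible permutation $kG$-module. (a) If $M$ is a $V$-projective $kG$-module, then $M$ is $V(\mathcal{F}_G)$-projective. (b) If $C$ is a $V$-endosplit-trivial complex of $kG$-modules, then $C$ is $V(\mathcal{F}_G)$-endosplit-trivial.
   Context: A $kG$-module $V$ is absolutely $p$-divisible if every indecomposable direct summand of $V$ has $k$-dimension divisible by $p$. For a $kG$-module $V$, a $kG$-module $M$ is $V$-projective if $M$ is isomorphic to a direct summand of $V\otimes_kN$ for some $kG$-module $N$. $V(\mathcal{F}_G)=\bigoplus_{Q\in s_p(G)\setminus\mathrm{Syl}_p(G)}k[G/Q]$, where $s_p(G)$ is the set of $p$-subgroups and $\mathrm{Syl}_p(G)$ the Sylow $p$-subgroups. A bounded complex $C$ of $p$-permutation $kG$-modules (finitely generated direct summands of permutation modules) is $V$-endosplit-trivial if $C^*\otimes_kC\simeq(k\oplus M)[0]$ in the homotopy category, where $C^*=\operatorname{Hom}_k(C,k)$, $M[0]$ denotes $M$ in degree $0$, and $M$ is a $V$-projective $kG$-module. *)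

(* Finite-dimensional kG-modules are matrix representations
   (row-vector convention: g acts by v |-> v *m rG g). *)
From HB Require Import structures.
From mathcomp Require Import all_boot all_order all_algebra all_fingroup all_solvable.
From mathcomp Require Import mxrepresentation character.
Set Implicit Arguments. Unset Strict Implicit. Unset Printing Implicit Defensive.
Import GRing.Theory.
Local Open Scope ring_scope.

Section Modules.
Variables (F : fieldType) (gT : finGroupType) (G : {group gT}).
Local Notation reprG := (mx_representation F G).

Definition mx_summand n (rX : reprG n) (U : 'M[F]_n) : Prop :=
  mxmodule rX U /\
  exists2 W : 'M[F]_n, mxmodule rX W & (mxdirect (U + W) /\ (U + W :=: 1%:M)%MS)%MS.

Definition iso_summand n (rX : reprG n) m (rM : reprG m) : Prop :=
  exists U : 'M[F]_n, exists modU : mxmodule rX U,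
    mx_summand rX U /\ mx_rsim (submod_repr modU) rM.

Definition mx_indecomposable n (rX : reprG n) (U : 'M[F]_n) : Prop :=
  U != 0 /\
  forall U1 U2 : 'M[F]_n, mxmodule rX U1 -> mxmodule rX U2 ->
    (mxdirect (U1 + U2))%MS -> (U1 + U2 :=: U)%MS ->
    U1 == 0 \/ U2 == 0.

Definition abs_p_divisible (p : nat) n (rV : reprG n) : Prop :=
  forall U : 'M[F]_n, mx_summand rV U -> mx_indecomposable rV U ->
    (p %| \rank U)%N.

(* permutation module: has a basis (rows of B) permuted by G *)
Definition perm_module n (rV : reprG n) : Prop :=
  exists2 B : 'M[F]_n, B \in unitmx &
    {in G, forall x, is_perm_mx (B *m rV x *m invmx B)}.

Definition p_perm_module m (rM : reprG m) : Prop :=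
  exists n, exists rP : reprG n, perm_module rP /\ iso_summand rP rM.

Definition V_projective n (rV : reprG n) m (rM : reprG m) : Prop :=
  exists n', exists rN : reprG n', iso_summand (prod_repr rV rN) rM.

Lemma triv_mx_repr : mx_repr G (fun _ : gT => 1%:M : 'M[F]_1).
Proof. by split=> // x y _ _; rewrite mulmx1. Qed.
Definition triv_repr := MxRepresentation triv_mx_repr.

Lemma dual_mx_repr n (rV : reprG n) : mx_repr G (fun x => (rV (x^-1)%g)^T).
Proof.
split=> [|x y Gx Gy]; first by rewrite invg1 repr_mx1 trmx1.
by rewrite invMg repr_mxM ?groupV // trmx_mul.
Qed.
Definition dual_repr n (rV : reprG n) := MxRepresentation (dual_mx_repr rV).

Section PermSet.
Variables (T : finType) (X : {set T}) (act : T -> gT -> T).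
Hypotheses (act1 : {in X, forall a, act a 1%g = a})
           (actM : {in X & G & G, forall a x y, act a (x * y)%g = act (act a x) y})
           (actX : {in X & G, forall a x, act a x \in X}).

Definition pset_mx (x : gT) : 'M[F]_#|X| :=
  \matrix_(i, j) ((act (enum_val i) x == enum_val j)%:R).

Lemma pset_mx_repr : mx_repr G pset_mx.
Proof.
split=> [|x y Gx Gy].
  apply/matrixP=> i j; rewrite !mxE act1 ?enum_valP //.
  by rewrite (inj_eq enum_val_inj).
apply/matrixP=> i j; rewrite !mxE.
have Xa : act (enum_val i) x \in X by apply: actX; rewrite ?enum_valP.
rewrite (bigD1 (enum_rank_in Xa (act (enum_val i) x))) //= !mxE.
rewrite enum_rankK_in // eqxx mul1r big1 ?addr0.
  by rewrite actM ?enum_valP.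
move=> k nk; rewrite !mxE.
case: eqP => [e|]; last by rewrite mul0r.
by case/eqP: nk; apply: enum_val_inj; rewrite -e enum_rankK_in.
Qed.

Definition pset_repr := MxRepresentation pset_mx_repr.
End PermSet.

(* The G-set of pairs (Q, Qg) with Q a non-Sylow p-subgroup of G and Qg a
   (right) coset of Q in G: its permutation module is
   V(F_G) = \bigoplus_{Q in s_p(G) \ Syl_p(G)} k[G/Q]. *)
Definition VF_set (p : nat) : {set {set gT} * {set gT}} :=
  [set QC | [&& group_set QC.1, QC.1 \subset G, (p.-group QC.1)%g,
               ~~ (p.-Sylow(G) QC.1)%g & QC.2 \in rcosets QC.1 G]].

Definition VF_act (QC : {set gT} * {set gT}) (x : gT) := (QC.1, (QC.2 :* x)%g).

Lemma VF_act1 p : {in VF_set p, forall a, VF_act a 1%g = a}.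
Proof. by case=> Q C _; rewrite /VF_act /= rcoset1. Qed.

Lemma VF_actM p :
  {in VF_set p & G & G, forall a x y, VF_act a (x * y)%g = VF_act (VF_act a x) y}.
Proof. by case=> Q C x y _ _ _; rewrite /VF_act /= rcosetM. Qed.

Lemma VF_actX p : {in VF_set p & G, forall a x, VF_act a x \in VF_set p}.
Proof.
case=> Q C x; rewrite !inE /= => /and5P[gQ sQG pQ nS /rcosetsP[g Gg ->]] Gx.
rewrite gQ sQG pQ nS /=; apply/rcosetsP; exists (g * x)%g; first exact: groupM.
by rewrite rcosetM.
Qed.

Definition VFG (p : nat) :=
  pset_repr (@VF_act1 p) (@VF_actM p) (@VF_actX p).

(* Bounded complexes of kG-modules, encoded as a graded module: a module
   with a basis, a degree for each basis vector (indexed by nat, only the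
   values below cdim matter), G preserving degrees, and a G-equivariant
   differential of degree +1 with d^2 = 0. *)
Record cplx := Cplx {
  cdim : nat;
  crep : reprG cdim;
  cdeg : nat -> int;
  cdif : 'M[F]_cdim }.

Definition is_complex (C : cplx) : Prop :=
  [/\ {in G, forall x, forall i j : 'I_(cdim C),
          crep C x i j != 0 -> cdeg C i = cdeg C j},
      forall i j : 'I_(cdim C), cdif C i j != 0 -> cdeg C j = (cdeg C i + 1)%R,
      {in G, forall x, crep C x *m cdif C = cdif C *m crep C x}
    & cdif C *m cdif C = 0].

(* the degree-z term C^z, as the span of the basis vectors of degree z *)
Definition cpiece (C : cplx) (z : int) : 'M[F]_(cdim C) :=
  \matrix_(i, j) ((i == j) && (cdeg C i == z))%:R.

Definition p_perm_complex (C : cplx) : Prop :=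
  is_complex C /\
  forall z (modz : mxmodule (crep C) (cpiece C z)), p_perm_module (submod_repr modz).

Definition cdual (C : cplx) : cplx :=
  @Cplx (cdim C) (dual_repr (crep C)) (fun k => - cdeg C k) (cdif C)^T.

Definition ctens (C D : cplx) : cplx :=
  let dg k := (cdeg C (k %/ cdim D) + cdeg D (k %% cdim D))%R in
  let sgn : 'M[F]_(cdim C * cdim D) :=
    \matrix_(k, l) ((k == l)%:R * (-1) ^+ `|cdeg C (k %/ cdim D)|%N) in
  @Cplx (cdim C * cdim D) (prod_repr (crep C) (crep D)) dg
        (tprod (cdif C) (1%:M : 'M_(cdim D))
         + sgn *m tprod (1%:M : 'M_(cdim C)) (cdif D)).

Definition chain_map (C D : cplx) (f : 'M[F]_(cdim C, cdim D)) : Prop :=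
  [/\ {in G, forall x, crep C x *m f = f *m crep D x},
      forall i j, f i j != 0 -> cdeg D j = cdeg C i
    & cdif C *m f = f *m cdif D].

Definition homotopic (C D : cplx) (f g : 'M[F]_(cdim C, cdim D)) : Prop :=
  exists h : 'M[F]_(cdim C, cdim D),
    [/\ {in G, forall x, crep C x *m h = h *m crep D x},
        forall i j, h i j != 0 -> (cdeg D j + 1)%R = cdeg C i
      & f - g = cdif C *m h + h *m cdif D].

Definition htpy_equiv (C D : cplx) : Prop :=
  exists f, exists g,
    [/\ @chain_map C D f, @chain_map D C g,
        @homotopic C C (f *m g) 1%:M & @homotopic D D (g *m f) 1%:M].

Definition endosplit_trivial n (rV : reprG n) (C : cplx) : Prop :=
  p_perm_complex C /\
  exists D : cplx,
    [/\ is_complex D, forall i, (i < cdim D)%N -> cdeg D i = 0,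
        htpy_equiv (ctens (cdual C) C) D &
        exists U : 'M[F]_(cdim D), exists W : 'M[F]_(cdim D),
        exists modU : mxmodule (crep D) U, exists modW : mxmodule (crep D) W,
          [/\ (mxdirect (U + W))%MS, (U + W :=: 1%:M)%MS,
              mx_rsim (submod_repr modU) triv_repr
            & V_projective rV (submod_repr modW)]].

End Modules.

(* Choose a basis of V permuted by G. If some orbit O had length prime to p,
   the averaging idempotent |O|^-1 u^T u, where u is the sum of the basis
   vectors in O, would split off a one-dimensional summand of V, contradicting
   absolute p-divisibility. So p divides every orbit length |G : H_t|, and a
   Sylow p-subgroup Q_t of the stabiliser H_t is a p-subgroup of G that is not
   Sylow. As |H_t : Q_t| is invertible in k, the orbit module k[G/H_t] is a
   retract of k[G/Q_t], a summand of V(F_G). Hence V is a retract of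
   V(F_G) (x) k^n, and V (x) N one of V(F_G) (x) (k^n (x) N). Part (b) only
   involves the V-projective summand M, so it follows from part (a). *)

From HB Require Import structures.
From mathcomp Require Import all_boot all_order all_algebra all_fingroup all_solvable.
From mathcomp Require Import mxrepresentation character zify.

Set Implicit Arguments.
Unset Strict Implicit.
Unset Printing Implicit Defensive.

Import GRing.Theory.
Local Open Scope ring_scope.

Section Retract.
Variables (F : fieldType) (gT : finGroupType) (G : {group gT}).
Local Notation reprG := (mx_representation F G).

Definition mx_retract m (rM : reprG m) n (rX : reprG n) : Prop :=
  exists f : 'M[F]_(m, n), exists g : 'M[F]_(n, m),
    [/\ {in G, forall x, rM x *m f = f *m rX x},
        {in G, forall x, rX x *m g = g *m rM x} & f *m g = 1%:M].

Lemma mx_retract_trans m (rA : reprG m) n (rB : reprG n) k (rC : reprG k) :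
  mx_retract rA rB -> mx_retract rB rC -> mx_retract rA rC.
Proof.
case=> f [g [fJ gJ fg]] [f' [g' [fJ' gJ' fg']]].
exists (f *m f'), (g' *m g); split.
- by move=> x Gx; rewrite mulmxA fJ // -(mulmxA f (rB x)) fJ' // mulmxA.
- by move=> x Gx; rewrite mulmxA gJ' // -(mulmxA g' (rB x)) gJ // mulmxA.
- by rewrite -mulmxA (mulmxA f') fg' mul1mx.
Qed.

Lemma commuting_mxmodule n (rX : reprG n) (e : 'M[F]_n) :
  {in G, forall x, rX x *m e = e *m rX x} -> mxmodule rX e.
Proof. by move=> ce; apply/mxmoduleP=> x Gx; rewrite -ce // submxMl. Qed.

Lemma idempotent_mx_summand n (rX : reprG n) (e : 'M[F]_n) :
  e *m e = e -> {in G, forall x, rX x *m e = e *m rX x} -> mx_summand rX e.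
Proof.
move=> ee ce; split; first exact: commuting_mxmodule.
exists (1%:M - e).
  apply: commuting_mxmodule => x Gx.
  by rewrite mulmxBr mulmxBl mulmx1 mul1mx ce.
split; last by apply/eqmxP; rewrite submx1 -{1}(subrK e 1%:M) addrC addmx_sub_adds.
apply/mxdirect_addsP/eqP; rewrite -submx0.
set K := (e :&: (1%:M - e))%MS.
have /submxP[D1 K_e] : (K <= e)%MS by apply: capmxSl.
have /submxP[D2 K_1e] : (K <= 1%:M - e)%MS by apply: capmxSr.
have : K *m e = K by rewrite K_e -mulmxA ee.
by rewrite {1}K_1e -mulmxA mulmxBl mul1mx ee subrr mulmx0 => <-.
Qed.

Lemma mx_indecomposable_rank1 n (rX : reprG n) (U : 'M[F]_n) :
  \rank U = 1%N -> mx_indecomposable rX U.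
Proof.
move=> rkU; split; first by rewrite -mxrank_eq0 rkU.
move=> U1 U2 _ _; rewrite mxdirectE /= => /eqP rk12 defU.
rewrite defU rkU in rk12; rewrite -!mxrank_eq0; lia.
Qed.

Lemma proj_mx_repr_comm n (rX : reprG n) (U W : 'M[F]_n) x :
  mxmodule rX U -> mxmodule rX W -> (U :&: W = 0)%MS -> (U + W :=: 1%:M)%MS ->
  x \in G -> rX x *m proj_mx U W = proj_mx U W *m rX x.
Proof.
move=> modU modW dxUW defUW Gx; set P := proj_mx U W.
have sPU : (P <= U)%MS by rewrite -[P]mul1mx proj_mx_sub.
have sQW : (1%:M - P <= W)%MS by rewrite -[P]mul1mx proj_mx_compl_sub // defUW.
have PxP : P *m rX x *m P = P *m rX x.
  by rewrite proj_mx_id // (mxmodule_trans modU Gx sPU).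
have QxP : (1%:M - P) *m rX x *m P = 0.
  by rewrite proj_mx_0 // (mxmodule_trans modW Gx sQW).
have splitx : rX x = P *m rX x + (1%:M - P) *m rX x.
  by rewrite -mulmxDl addrC subrK mul1mx.
by rewrite {1}splitx (mulmxDl (P *m rX x)) PxP QxP addr0.
Qed.

Lemma iso_summand_retract n (rX : reprG n) m (rM : reprG m) :
  iso_summand rX rM -> mx_retract rM rX.
Proof.
case=> U [modU [[_ [W modW [dxUW defUW]]] [B dimU freeB rsimB]]].
have {}dxUW : (U :&: W = 0)%MS by apply/mxdirect_addsP.
case/row_freeP: freeB => B' BB'.
have B'B : B' *m B = 1%:M.
  by move: (B) (B') BB'; rewrite dimU => C C'; apply: mulmx1C.
set P := proj_mx U W.
have sPU : (P <= U)%MS by rewrite -[P]mul1mx proj_mx_sub.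
exists (B' *m val_submod 1%:M), (in_submod U P *m B); split.
- move=> x Gx.
  have B'J : B' *m submod_repr modU x = rM x *m B'.
    by rewrite -[LHS]mulmx1 -BB' mulmxA -(mulmxA B') rsimB // mulmxA B'B mul1mx.
  have subJ : submod_repr modU x *m val_submod 1%:M = val_submod 1%:M *m rX x.
    by rewrite -val_submodE -[submod_repr modU x]mul1mx val_submodJ.
  by rewrite mulmxA -B'J -(mulmxA B' (val_submod _)) -subJ; apply/esym/mulmxA.
- move=> x Gx.
  rewrite mulmxA in_submodE mulmxA (proj_mx_repr_comm modU modW) //.
  rewrite -(in_submodE U (P *m rX x)) (in_submodJ modU) //.
  by rewrite -(mulmxA (in_submod U P)) rsimB // in_submodE !mulmxA.
- have PK : val_submod 1%:M *m in_submod U P = 1%:M.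
    rewrite in_submodE mulmxA proj_mx_id ?val_submodP //.
    by rewrite -in_submodE val_submodK.
  by rewrite mulmxA -(mulmxA B') PK mulmx1 B'B.
Qed.

Lemma retract_iso_summand n (rX : reprG n) m (rM : reprG m) :
  mx_retract rM rX -> iso_summand rX rM.
Proof.
case=> f [g [fJ gJ fg]]; set e := g *m f.
have ee : e *m e = e by rewrite /e mulmxA -(mulmxA g) fg mulmx1.
have eJ : {in G, forall x, rX x *m e = e *m rX x}.
  by move=> x Gx; rewrite /e mulmxA gJ // -(mulmxA g (rM x)) fJ // mulmxA.
have modU := commuting_mxmodule eJ.
exists e, modU; split; first exact: idempotent_mx_summand.
have rk_e : \rank e = m.
  apply/eqP; rewrite eqn_leq (leq_trans (mxrankM_maxl _ _) (rank_leq_col g)) /=.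
  have <- : \rank (f *m e *m g) = m by rewrite /e !mulmxA fg mul1mx fg mxrank1.
  exact: leq_trans (mxrankM_maxl _ _) (mxrankM_maxr _ _).
have baseK : row_base e *m e = row_base e.
  have /submxP[D ->] : (row_base e <= e)%MS by rewrite eq_row_base.
  by rewrite -mulmxA ee.
exists (row_base e *m g) => //.
- apply/eqP/anti_leq/andP; split; first exact: rank_leq_row.
  have rk_base : \rank (row_base e *m g *m f) = \rank e.
    by rewrite -mulmxA -/e baseK eq_row_base.
  by rewrite -[X in (X <= _)%N]rk_base mxrankM_maxl.
- move=> x Gx /=; rewrite mulmxA.
  change (submod_mx modU x *m row_base e) with (val_submod (submod_mx modU x)).
  rewrite -[submod_mx _ x]mul1mx val_submodJ // /val_submod /= mul1mx.
  by rewrite -(mulmxA (row_base e) (rX x)) gJ // mulmxA.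
Qed.

End Retract.

Section TensorIndex.

Lemma tprod_index_subproof m n (i : 'I_m) (j : 'I_n) : (i * n + j < m * n)%N.
Proof. case: i j => i ltim [j ltjn] /=; nia. Qed.

Definition tprod_index m n (i : 'I_m) (j : 'I_n) : 'I_(m * n) :=
  Ordinal (tprod_index_subproof i j).

Lemma tprod_unindex_subproof m n (k : 'I_(m * n)) : (k %/ n < m)%N * (k %% n < n)%N.
Proof. by case: k => k /=; case: n => [|n]; rewrite ?muln0 // ltn_divLR // ltn_mod. Qed.

Definition tprod_unindex m n (k : 'I_(m * n)) : 'I_m * 'I_n :=
  (Ordinal (tprod_unindex_subproof k).1, Ordinal (tprod_unindex_subproof k).2).

Lemma tprod_unindexK m n (k : 'I_(m * n)) :
  tprod_index (tprod_unindex k).1 (tprod_unindex k).2 = k.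
Proof. by apply: val_inj; rewrite /= -divn_eq. Qed.

Lemma tprod_indexK m n (i : 'I_m) (j : 'I_n) : tprod_unindex (tprod_index i j) = (i, j).
Proof.
have ltjn := ltn_ord j.
congr pair; apply: val_inj; rewrite /= ?modnMDl ?modn_small //.
by rewrite divnMDl ?divn_small ?addn0 //; lia.
Qed.

Variant tprod_index_spec m n : 'I_(m * n) -> Type :=
  TprodIndexSpec (i : 'I_m) (j : 'I_n) : tprod_index_spec (tprod_index i j).

Lemma tprod_indexP m n (k : 'I_(m * n)) : tprod_index_spec k.
Proof. by rewrite -(tprod_unindexK k); constructor. Qed.

Lemma big_tprod_index (R : Type) (idx : R) (op : Monoid.com_law idx) m n
    (f : 'I_(m * n) -> R) :
  \big[op/idx]_k f k = \big[op/idx]_(i < m) \big[op/idx]_(j < n) f (tprod_index i j).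
Proof.
rewrite pair_bigA (reindex (fun ij => tprod_index ij.1 ij.2)) //=.
by exists (@tprod_unindex m n) => [[i j]|k] _; rewrite ?tprod_indexK ?tprod_unindexK.
Qed.

Variable F : fieldType.

Lemma trow_tprod_indexE n1 (u : 'rV[F]_n1) m2 n2 (B : 'M[F]_(m2, n2)) i j1 j2 :
  trow u B i (tprod_index j1 j2) = u 0 j1 * B i j2.
Proof.
elim: n1 u j1 => [|n1 IHn] u [j1 ltj1] //; have ltj2 := ltn_ord j2.
rewrite /= mxE; case: splitP => k /= defk.
  have j1_0 : j1 = 0%N by move: (ltn_ord k) defk; nia.
  have -> : k = j2 by apply: val_inj; move: defk; rewrite j1_0 /=; lia.
  by rewrite !mxE; congr (u 0 _ * _); apply: val_inj.
case: j1 ltj1 defk => [|j1] ltj1 defk; first lia.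
have -> : k = tprod_index (@Ordinal n1 j1 ltj1) j2 by apply: val_inj => /=; lia.
by rewrite IHn mxE; congr (u 0 _ * _); apply: val_inj.
Qed.

Lemma tprod_indexE m1 n1 (A : 'M[F]_(m1, n1)) m2 n2 (B : 'M[F]_(m2, n2)) i1 i2 j1 j2 :
  tprod A B (tprod_index i1 i2) (tprod_index j1 j2) = A i1 j1 * B i2 j2.
Proof.
elim: m1 A i1 => [|m1 IHm] A [i1 lti1] //; have lti2 := ltn_ord i2.
rewrite /= mxE; case: splitP => k /= defk.
  have i1_0 : i1 = 0%N by move: (ltn_ord k) defk; nia.
  have -> : k = i2 by apply: val_inj; move: defk; rewrite i1_0 /=; lia.
  by rewrite trow_tprod_indexE !mxE; congr (A _ _ * _); apply: val_inj.
case: i1 lti1 defk => [|i1] lti1 defk; first lia.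
have -> : k = tprod_index (@Ordinal m1 i1 lti1) i2 by apply: val_inj => /=; lia.
by rewrite IHm mxE; congr (A _ _ * _); apply: val_inj.
Qed.

End TensorIndex.

Lemma cast_tprod_indexA m1 m2 m3 (e : (m1 * (m2 * m3) = m1 * m2 * m3)%N)
    (i : 'I_m1) (j : 'I_m2) (t : 'I_m3) :
  cast_ord e (tprod_index i (tprod_index j t)) = tprod_index (tprod_index i j) t.
Proof. by apply: val_inj; rewrite /= mulnDl -mulnA addnA. Qed.

Lemma tprodA (F : fieldType) m1 n1 (A : 'M[F]_(m1, n1)) m2 n2 (B : 'M[F]_(m2, n2))
    m3 n3 (C : 'M[F]_(m3, n3)) :
  castmx (esym (mulnA m1 m2 m3), esym (mulnA n1 n2 n3)) (tprod (tprod A B) C) =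
  tprod A (tprod B C).
Proof.
apply/matrixP=> k l; rewrite castmxE /= !esymK.
case: (tprod_indexP k) => i1 k23; case: (tprod_indexP k23) => i2 i3.
case: (tprod_indexP l) => j1 l23; case: (tprod_indexP l23) => j2 j3.
by rewrite !cast_tprod_indexA !tprod_indexE mulrA.
Qed.

Section TensorRetract.
Variables (F : fieldType) (gT : finGroupType) (G : {group gT}).
Local Notation reprG := (mx_representation F G).

Lemma trivn_mx_repr m : mx_repr G (fun _ : gT => 1%:M : 'M[F]_m).
Proof. by split=> // x y _ _; rewrite mulmx1. Qed.

Definition trivn_repr m := MxRepresentation (trivn_mx_repr m).

Lemma mx_retract_cast m n (e : m = n) (rA : reprG m) (rB : reprG n) :
  {in G, forall x, castmx (e, e) (rA x) = rB x} -> mx_retract rA rB.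
Proof.
case: n / e rB => rB rAB; exists 1%:M, 1%:M.
by split=> [x Gx|x Gx|]; rewrite ?mulmx1 ?mul1mx // -rAB // castmx_id.
Qed.

Lemma mx_retract_prodA m1 (rA : reprG m1) m2 (rB : reprG m2) m3 (rC : reprG m3) :
  mx_retract (prod_repr (prod_repr rA rB) rC) (prod_repr rA (prod_repr rB rC)).
Proof.
by apply: (@mx_retract_cast _ _ (esym (mulnA m1 m2 m3))) => x _; apply: tprodA.
Qed.

Lemma mx_retract_prodl m (rA : reprG m) n (rB : reprG n) k (rC : reprG k) :
  mx_retract rA rB -> mx_retract (prod_repr rA rC) (prod_repr rB rC).
Proof.
case=> f [g [fJ gJ fg]]; exists (tprod f 1%:M), (tprod g 1%:M); split.
- by move=> x Gx /=; rewrite -!tprodE fJ // mulmx1 mul1mx.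
- by move=> x Gx /=; rewrite -!tprodE gJ // mulmx1 mul1mx.
- by rewrite -tprodE fg mulmx1 tprod1.
Qed.

End TensorRetract.

Lemma sumr_indicator (R : pzSemiRingType) (I : finType) (A : {pred I}) :
  \sum_i (i \in A)%:R = #|A|%:R :> R.
Proof.
by rewrite -sumr_const [RHS]big_mkcond; apply: eq_bigr => i _; case: (i \in A).
Qed.

Lemma sumr_mul_delta (R : pzSemiRingType) (I : finType) (J : eqType) (h : I -> J)
    (f : I -> R) i0 l :
  injective h -> h i0 = l -> \sum_i f i * (h i == l)%:R = f i0.
Proof.
move=> injh <-; rewrite (bigD1 i0) //= eqxx mulr1 big1 ?addr0 // => i ne_i.
by rewrite (inj_eq injh) (negbTE ne_i) mulr0.
Qed.

Lemma perm_mx_inj (F : fieldType) m : injective (@perm_mx F m).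
Proof.
move=> s t st; apply/permP => i; apply/eqP.
have := congr1 (fun A : 'M[F]_m => A i (s i)) st; rewrite /= /perm_mx !mxE eqxx eq_sym.
by case: eqP => // _ /eqP; rewrite oner_eq0.
Qed.

Section PermutationBasis.
Variables (F : fieldType) (gT : finGroupType) (G : {group gT}).
Variables (n : nat) (rV : mx_representation F G n) (B : 'M[F]_n).
Hypotheses (unitB : B \in unitmx)
  (permB : {in G, forall x, is_perm_mx (B *m rV x *m invmx B)}).

Definition rP x := B *m rV x *m invmx B.

Definition rP_perm x : {perm 'I_n} := odflt 1%g [pick s | rP x == perm_mx s].

Lemma rP_permE x : x \in G -> rP x = perm_mx (rP_perm x).
Proof.
move=> Gx; rewrite /rP_perm; case: pickP => [s /eqP // | no_s].
by have /existsP[s] := permB Gx; rewrite no_s.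
Qed.

Lemma rPM x y : x \in G -> y \in G -> rP (x * y)%g = rP x *m rP y.
Proof. by move=> Gx Gy; rewrite /rP repr_mxM // !mulmxA mulmxKV. Qed.

Lemma rP_rV x : x \in G -> rP x *m B = B *m rV x.
Proof. by move=> Gx; rewrite /rP mulmxKV. Qed.

Lemma rV_rP x : x \in G -> rV x *m invmx B = invmx B *m rP x.
Proof. by move=> Gx; rewrite /rP !mulmxA mulVmx // mul1mx. Qed.

Lemma rP_permM x y :
  x \in G -> y \in G -> rP_perm (x * y)%g = (rP_perm x * rP_perm y)%g.
Proof.
by move=> Gx Gy; apply: (@perm_mx_inj F); rewrite perm_mxM -!rP_permE ?groupM ?rPM.
Qed.

Definition basis_act i x := rP_perm x i.

Lemma basis_act_is_action : is_action G basis_act.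
Proof.
split=> [x i j /= | i x y Gx Gy]; first exact: perm_inj.
by rewrite /basis_act rP_permM // permM.
Qed.

Definition basis_action := Action basis_act_is_action.
Local Notation to := basis_action.

Lemma rP_actE x i j : x \in G -> rP x i j = (to i x == j)%:R.
Proof. by move=> Gx; rewrite rP_permE // /perm_mx !mxE. Qed.

Definition orbit_row i : 'rV[F]_n := \row_a (a \in orbit to G i)%:R.

Definition orbit_proj i : 'M[F]_n :=
  (#|orbit to G i|%:R)^-1 *: ((orbit_row i)^T *m orbit_row i).

Lemma orbit_rowJ i x : x \in G -> orbit_row i *m rP x = orbit_row i.
Proof.
move=> Gx; apply/matrixP => r b; rewrite mxE.
under eq_bigr do rewrite rP_actE //.
rewrite (sumr_mul_delta _ (act_inj to x) (actKVin to Gx b)) !mxE.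
by rewrite orbit_actr_in ?groupV.
Qed.

Lemma rP_orbit_col i x : x \in G -> rP x *m (orbit_row i)^T = (orbit_row i)^T.
Proof.
move=> Gx; apply/matrixP => a c; rewrite mxE.
under eq_bigr do rewrite rP_actE // mulrC eq_sym.
by rewrite (sumr_mul_delta _ (@inj_id _) (erefl (to a x))) !mxE orbit_actr_in.
Qed.

Lemma orbit_proj_comm i x : x \in G -> rP x *m orbit_proj i = orbit_proj i *m rP x.
Proof.
move=> Gx; rewrite /orbit_proj -scalemxAl -scalemxAr.
by rewrite mulmxA rP_orbit_col // -mulmxA orbit_rowJ.
Qed.

Lemma orbit_projK i :
  #|orbit to G i|%:R != 0 :> F -> orbit_proj i *m orbit_proj i = orbit_proj i.
Proof.
move=> unitO.
have row_col : orbit_row i *m (orbit_row i)^T = (#|orbit to G i|%:R)%:M.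
  apply/matrixP => r c; rewrite !ord1 !mxE -sumr_indicator.
  by apply: eq_bigr => a _; rewrite !mxE -natrM mulnb andbb.
rewrite /orbit_proj -scalemxAl -scalemxAr scalerA mulmxA -(mulmxA _ (orbit_row i)).
by rewrite row_col mul_mx_scalar -scalemxAl scalerA mulfVK.
Qed.

Lemma rank_orbit_proj i : #|orbit to G i|%:R != 0 :> F -> \rank (orbit_proj i) = 1%N.
Proof.
move=> unitO.
have row_neq0 : orbit_row i != 0.
  by apply/rV0Pn; exists i; rewrite mxE orbit_refl oner_eq0.
rewrite /orbit_proj eqmx_scale ?invr_eq0 // mxrankMfree ?mxrank_tr ?rank_rV ?row_neq0 //.
by rewrite /row_free rank_rV row_neq0.
Qed.

Variable p : nat.
Hypotheses (charFp : p \in [pchar F]) (pdivV : abs_p_divisible p rV).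

Lemma abs_p_divisible_orbit i : (p %| #|orbit to G i|)%N.
Proof.
apply/negPn/negP; rewrite (dvdn_pcharf charFp) => unitO.
set e := invmx B *m orbit_proj i *m B.
have ee : e *m e = e.
  by rewrite /e !mulmxA mulmxK // -(mulmxA (invmx B)) orbit_projK.
have eJ : {in G, forall x, rV x *m e = e *m rV x}.
  move=> x Gx; rewrite /e !mulmxA rV_rP // -(mulmxA (invmx B) (rP x)).
  by rewrite orbit_proj_comm // !mulmxA mulmxKV.
have rk_e : \rank e = 1%N.
  rewrite mxrankMfree ?row_free_unit // eqmxMfull ?row_full_unit ?unitmx_inv //.
  exact: rank_orbit_proj.
have := pdivV (idempotent_mx_summand ee eJ) (mx_indecomposable_rank1 _ rk_e).
by rewrite rk_e dvdn1 => /eqP p1; have := pcharf_prime charFp; rewrite p1.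
Qed.

End PermutationBasis.

Section OrbitSylow.
Variables (gT : finGroupType) (G : {group gT}) (T : finType) (to : action G T).
Variable p : nat.
Hypotheses (pr_p : prime p) (dvd_orbit : forall t, (p %| #|orbit to G t|)%N).
Local Open Scope group_scope.

Definition stab t := 'C_G[t | to]%G.

Definition syl t : {group gT} := sval (Sylow_exists p (stab t)).

Lemma sylP t : p.-Sylow(stab t) (syl t).
Proof. exact: svalP (Sylow_exists p (stab t)). Qed.

Lemma syl_sub_stab t : syl t \subset stab t.
Proof. exact: pHall_sub (sylP t). Qed.

Lemma stab_sub t : stab t \subset G.
Proof. exact: subsetIl. Qed.

Lemma syl_sub t : syl t \subset G.
Proof. exact: subset_trans (syl_sub_stab t) (stab_sub t). Qed.

Lemma mem_stab t g : (g \in stab t) = (g \in G) && (to t g == t).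
Proof. by rewrite !inE sub1set inE andbA andbb. Qed.

Lemma syl_fix t g : g \in syl t -> to t g = t.
Proof. by move/(subsetP (syl_sub_stab t)); rewrite mem_stab => /andP[_ /eqP]. Qed.

Lemma syl_not_Sylow t : ~~ p.-Sylow(G) (syl t).
Proof.
apply/negP => /and3P[_ _]; rewrite p'natE // => /negP; apply.
rewrite -(Lagrange_index (stab_sub t) (syl_sub_stab t)) dvdn_mulr //.
by rewrite -card_orbit_in // dvd_orbit.
Qed.

Definition orbit_rep t := odflt t [pick u in orbit to G t].

Lemma orbit_repJ t x : x \in G -> orbit_rep (to t x) = orbit_rep t.
Proof.
move=> Gx; rewrite /orbit_rep.
have -> : orbit to G (to t x) = orbit to G t by apply/orbit_in_eqP; rewrite ?mem_orbit.
by case: pickP => // no_u; have := no_u t; rewrite orbit_refl.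
Qed.

Lemma mem_orbit_rep t : t \in orbit to G (orbit_rep t).
Proof.
rewrite /orbit_rep; case: pickP => [u | no_u]; last exact: orbit_refl.
by rewrite orbit_in_sym.
Qed.

Definition coset_pt t (C : {set gT}) := to t (repr C).

Lemma coset_ptE t g : g \in G -> coset_pt t (syl t :* g) = to t g.
Proof.
move=> Gg; have := mem_repr_rcoset (syl t) g; rewrite /coset_pt mem_rcoset => Qcg.
have Gcg : repr (syl t :* g) * g^-1 \in G := subsetP (syl_sub t) _ Qcg.
by rewrite -{1}(mulgKV g (repr _)) actMin // (syl_fix Qcg).
Qed.

Lemma card_coset_pt t g0 : g0 \in G ->
  #|[set C in rcosets (syl t) G | coset_pt t C == to t g0]| = #|stab t : syl t|.
Proof.
move=> Gg0; set S := [set C in _ | _].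
have -> : S = (fun D => D :* g0) @: rcosets (syl t) (stab t).
  apply/setP => C; rewrite inE; apply/andP/imsetP => [[/rcosetsP[g Gg ->]]|].
    rewrite coset_ptE // => /eqP tg; exists (syl t :* (g * g0^-1)); last first.
      by rewrite /= rcosetM rcosetKV.
    apply/rcosetsP; exists (g * g0^-1) => //.
    by rewrite mem_stab groupM ?groupV //= actMin ?groupV // tg actKin.
  case=> _ /rcosetsP[h stab_h ->] ->; move: stab_h; rewrite mem_stab => /andP[Gh th].
  rewrite -rcosetM coset_ptE ?groupM // actMin // (eqP th); split=> //.
  by apply/rcosetsP; exists (h * g0); rewrite ?groupM.
by rewrite card_imset //; apply: rcoset_inj.
Qed.

End OrbitSylow.

Arguments coset_pt : simpl never.

Section VFAction.
Variables (gT : finGroupType) (G : {group gT}) (p : nat).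
Local Notation VF := (VF_set G p).
Local Notation ev := (@enum_val _ (mem VF)).
Local Open Scope group_scope.

(* Acting trivially outside G makes vf_act x injective for every x, as
   is_action requires. *)
Definition vf_act (a : 'I_#|VF|) x :=
  if x \in G then enum_rank_in (enum_valP a) (VF_act (ev a) x) else a.

Lemma vf_actE a x : x \in G -> ev (vf_act a x) = VF_act (ev a) x.
Proof. by move=> Gx; rewrite /vf_act Gx enum_rankK_in // VF_actX ?enum_valP. Qed.

Lemma vf_act_is_action : is_action G vf_act.
Proof.
split=> [x a b eq_ab | a x y Gx Gy]; last first.
  by apply: enum_val_inj; rewrite !vf_actE ?groupM // (@VF_actM _ G p) ?enum_valP.
case Gx: (x \in G) eq_ab; last by rewrite /vf_act Gx.
move/(congr1 enum_val); rewrite !vf_actE // /VF_act => -[eq1 /rcoset_inj eq2].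
by apply: enum_val_inj; case: (ev a) (ev b) eq1 eq2 => Q C [Q' C'] /= -> ->.
Qed.

Definition vf_action := Action vf_act_is_action.

Lemma VF_cosetP y : y \in VF -> y.2 \in rcosets y.1 G.
Proof. by rewrite inE => /and5P[]. Qed.

Lemma VF_memP (Q : {group gT}) C :
  Q \subset G -> p.-group Q -> ~~ p.-Sylow(G) Q -> C \in rcosets Q G ->
  ((Q : {set gT}), C) \in VF.
Proof. by move=> sQG pQ notSylQ QGC; rewrite inE /= groupP sQG pQ notSylQ. Qed.

End VFAction.

Section PermModuleRetract.
Variables (F : fieldType) (gT : finGroupType) (G : {group gT}).
Variables (n : nat) (rV : mx_representation F G n) (B : 'M[F]_n).
Hypotheses (unitB : B \in unitmx)
  (permB : {in G, forall x, is_perm_mx (B *m rV x *m invmx B)}).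
Variable p : nat.
Hypotheses (charFp : p \in [pchar F]) (pdivV : abs_p_divisible p rV).

Local Notation to := (basis_action unitB permB).
Local Notation rep := (orbit_rep to).
Local Notation Q t := (syl to p t).
Local Notation VF := (VF_set G p).
Local Notation NV := #|VF|.
Local Notation ev := (@enum_val _ (mem VF)).
Local Notation vf := (vf_action G p).
Local Notation rY := (prod_repr (VFG F G p) (trivn_repr F G n)).

Lemma prime_p : prime p.
Proof. exact: pcharf_prime charFp. Qed.

Definition lies_over (a : 'I_NV) i : bool :=
  ((ev a).1 == Q (rep i)) && (coset_pt to (rep i) (ev a).2 == i).

Lemma lies_overJ a i x : x \in G -> lies_over (vf a x) (to i x) = lies_over a i.
Proof.
move=> Gx; rewrite /lies_over /= vf_actE // orbit_repJ //=.
have := VF_cosetP (enum_valP a); case: (ev a) => C D /= CGD.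
case: eqP => //= defC; move: CGD; rewrite defC => /rcosetsP[g Gg ->].
by rewrite -rcosetM !coset_ptE ?groupM // actMin // (inj_eq (act_inj to x)).
Qed.

Lemma syl_VF t C : C \in rcosets (Q t) G -> ((Q t : {set gT}), C) \in VF.
Proof.
apply: VF_memP; first exact: syl_sub.
  exact: pHall_pgroup (sylP to p t).
exact: syl_not_Sylow prime_p (abs_p_divisible_orbit unitB permB charFp pdivV) t.
Qed.

Definition stab_index i : F := (#|stab to (rep i) : Q (rep i)|%g)%:R.

Lemma stab_index_neq0 i : stab_index i != 0.
Proof.
rewrite /stab_index -(dvdn_pcharf charFp) -p'natE ?prime_p //.
by case/and3P: (sylP to p (rep i)).
Qed.

Lemma sum_lies_over i : \sum_a (lies_over a i)%:R = stab_index i.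
Proof.
have [g0 Gg0 def_i] := orbitP (mem_orbit_rep to i).
rewrite /stab_index (sumr_indicator F [pred a | lies_over a i]).
rewrite -(card_coset_pt to p (rep i) Gg0) def_i.
rewrite -(card_in_imset (f := fun a => (ev a).2)); last first.
  move=> a b /andP[/eqP Qa _] /andP[/eqP Qb _] ab; apply: enum_val_inj.
  by rewrite [ev a]surjective_pairing [ev b]surjective_pairing Qa Qb ab.
congr (_%:R); apply: eq_card => C; rewrite [RHS]inE.
apply/imsetP/andP => [[a /andP[/eqP Qa /eqP Ca] ->] | [QGC /eqP Ci]].
  by rewrite Ca -Qa (VF_cosetP (enum_valP a)).
have VF_C := syl_VF QGC.
exists (enum_rank_in VF_C ((Q (rep i) : {set gT}), C)) => /=; last first.
  by rewrite enum_rankK_in.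
by rewrite inE /lies_over enum_rankK_in //= Ci !eqxx.
Qed.

(* The embedding of V sends e_i to the sum of the e_(Q_t, C) (x) e_t over the
   cosets C lying over i, where t is the representative of the orbit of i;
   the second tensor factor keeps the orbits apart. *)
Definition vf_coef (k : 'I_(NV * n)) i : bool :=
  ((tprod_unindex k).2 == rep i) && lies_over (tprod_unindex k).1 i.

Lemma vf_coefE a t i : vf_coef (tprod_index a t) i = (t == rep i) && lies_over a i.
Proof. by rewrite /vf_coef tprod_indexK. Qed.

Lemma vf_coef_inj k i j : vf_coef k i -> vf_coef k j -> i = j.
Proof.
case: (tprod_indexP k) => a t; rewrite !vf_coefE.
case/and3P=> /eqP-> _ /eqP Ci /and3P[/eqP rep_ij _ /eqP Cj].
by rewrite -Ci -Cj rep_ij.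
Qed.

Lemma vf_coef_mul k i j :
  (vf_coef k i)%:R * (vf_coef k j)%:R = (vf_coef k i)%:R * (i == j)%:R :> F.
Proof.
rewrite -!natrM !mulnb; congr (nat_of_bool _)%:R.
apply/andP/andP=> [[ci cj] | [ci /eqP <-]] //.
by split=> //; apply/eqP/(vf_coef_inj ci cj).
Qed.

Lemma sum_vf_coef i : \sum_k (vf_coef k i)%:R = stab_index i.
Proof.
rewrite big_tprod_index -sum_lies_over; apply: eq_bigr => a _.
under eq_bigr do rewrite vf_coefE -mulnb natrM mulrC.
by rewrite (sumr_mul_delta _ (@inj_id _) (erefl (rep i))).
Qed.

Definition vf_embed : 'M[F]_(n, NV * n) := \matrix_(i, k) (vf_coef k i)%:R.

Definition vf_proj : 'M[F]_(NV * n, n) :=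
  \matrix_(k, j) ((vf_coef k j)%:R / stab_index j).

Lemma vf_embedK : vf_embed *m vf_proj = 1%:M.
Proof.
apply/matrixP => i j; rewrite !mxE.
under eq_bigr do rewrite !mxE mulrA vf_coef_mul.
rewrite -!big_distrl /= sum_vf_coef.
by case: eqP => [-> | _]; rewrite ?mulr1 ?divff ?stab_index_neq0 // mulr0 mul0r.
Qed.

Lemma rYE x a t b u : x \in G ->
  rY x (tprod_index a t) (tprod_index b u) = (vf a x == b)%:R * (t == u)%:R.
Proof.
by move=> Gx; rewrite [rY x]/= tprod_indexE !mxE -(inj_eq enum_val_inj) vf_actE.
Qed.

Lemma vf_embedJ x : x \in G -> rP rV B x *m vf_embed = vf_embed *m rY x.
Proof.
move=> Gx; apply/matrixP => i k; case: (tprod_indexP k) => b u.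
rewrite mxE; under eq_bigr do rewrite rP_actE // mxE mulrC eq_sym.
rewrite (sumr_mul_delta _ (@inj_id _) (erefl (to i x))).
rewrite mxE big_tprod_index; under eq_bigr do under eq_bigr do rewrite mxE rYE // mulrA.
under eq_bigr do rewrite (sumr_mul_delta _ (@inj_id _) (erefl u)).
rewrite (sumr_mul_delta _ (act_inj vf x) (actKVin vf Gx b)) !vf_coefE orbit_repJ //.
by rewrite -{1}(actKVin vf Gx b) lies_overJ.
Qed.

Lemma vf_projJ x : x \in G -> rY x *m vf_proj = vf_proj *m rP rV B x.
Proof.
move=> Gx; apply/matrixP => k j; case: (tprod_indexP k) => a t.
rewrite mxE big_tprod_index.
under eq_bigr do under eq_bigr do rewrite rYE // mulrAC [t == _]eq_sym.
under eq_bigr do rewrite (sumr_mul_delta _ (@inj_id _) (erefl t)) mulrC eq_sym.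
rewrite (sumr_mul_delta _ (@inj_id _) (erefl (vf a x))).
rewrite [RHS]mxE; under eq_bigr do rewrite rP_actE //.
rewrite (sumr_mul_delta _ (act_inj to x) (actKVin to Gx j)) !mxE !vf_coefE.
rewrite /stab_index orbit_repJ ?groupV //.
by rewrite -[X in lies_over _ X](actKVin to Gx j) lies_overJ.
Qed.

Lemma mx_retract_VF : mx_retract rV rY.
Proof.
exists (invmx B *m vf_embed), (vf_proj *m B); split.
- by move=> x Gx; rewrite mulmxA rV_rP // -mulmxA vf_embedJ // mulmxA.
- move=> x Gx; rewrite mulmxA vf_projJ //.
  by rewrite -(mulmxA vf_proj (rP rV B x)) rP_rV // mulmxA.
- by rewrite -mulmxA (mulmxA vf_embed) vf_embedK mul1mx mulVmx.
Qed.

End PermModuleRetract.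

Section RelativeProjectivity.
Variables (F : fieldType) (gT : finGroupType) (G : {group gT}).
Local Notation reprG := (mx_representation F G).

Lemma V_projective_retract n (rV : reprG n) k (rW : reprG k) l (rL : reprG l) :
  mx_retract rV (prod_repr rW rL) ->
  forall m (rM : reprG m), V_projective rV rM -> V_projective rW rM.
Proof.
move=> rVWL m rM [n' [rN /iso_summand_retract rMVN]].
exists (l * n')%N, (prod_repr rL rN); apply: retract_iso_summand.
apply: mx_retract_trans rMVN _; apply: mx_retract_trans (mx_retract_prodl rN rVWL) _.
exact: mx_retract_prodA.
Qed.

Lemma endosplit_trivialS n (rV : reprG n) k (rW : reprG k) :
  (forall m (rM : reprG m), V_projective rV rM -> V_projective rW rM) ->
  forall C, endosplit_trivial rV C -> endosplit_trivial rW C.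
Proof.
move=> projVW C [pC [D [cD degD CD [U [W [modU [modW [dxUW defUW trivU projW]]]]]]]].
split=> //; exists D; split=> //; exists U, W, modU, modW; split=> //.
exact: projVW.
Qed.

End RelativeProjectivity.

Theorem theorem2p10 (F : fieldType) (p : nat) (gT : finGroupType) (G : {group gT})
    (charFp : (p \in [pchar F])%R) (n : nat) (rV : mx_representation F G n) :
  perm_module rV -> abs_p_divisible p rV ->
  (forall m (rM : mx_representation F G m),
      V_projective rV rM -> V_projective (VFG F G p) rM) /\
  (forall C : cplx F G,
      endosplit_trivial rV C -> endosplit_trivial (VFG F G p) C).
Proof.
move=> [B unitB permB] pdivV.
have projVF := V_projective_retract (mx_retract_VF unitB permB charFp pdivV).
by split=> //; apply: endosplit_trivialS.
Qed.
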